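(* Let $L\ge 1$ and $n\ge0$ be integers. Let $\tilde A_{L,0}(n)$ be the number of partitions $\pi$ of $n$ into parts congruent to $\pm1\pmod 8$ with largest part at most $8L-1$, such that $\nu(\pi,1)\ge\nu(\pi,7)$ and, writing $D=\nu(\pi,1)-\nu(\pi,7)$, at least one of the following holds: (i) $3\mid D$ and $\mu(\pi,1)\ge \tfrac23 D$; (ii) $5\mid D$, $3\nmid D$, and $\mu(\pi,1)\ge\tfrac45 D$; (iii) $D\equiv -8\pmod{15}$, $\mu(\pi,7)>0$, and $\mu(\pi,1)\ge\tfrac15(4D-3)$. Then $\tilde A_{L,0}(n)=A_{L,1}(n)$, where $A_{L,1}(n)$ is the number of partitions of $n$ into parts congruent to $\pm3\pmod 8$ with largest part at most $8L-3$.
   Context: For a partition $\pi$, $\nu(\pi,i)$ denotes the number of parts of $\pi$ congruent to $i\pmod 8$, and $\mu(\pi,i)$ denotes the number of parts of $\pi$ equal to $i$. *)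

From mathcomp Require Import all_boot.
Set Implicit Arguments. Unset Strict Implicit. Unset Printing Implicit Defensive.

(* A partition of n is represented by its multiplicity function:
   m i = number of parts equal to i, for 1 <= i <= n (m 0 = 0).
   Every multiplicity is at most n, so m : 'I_n.+1 -> 'I_n.+1 loses nothing,
   and this is a bijection with the partitions of n. *)
Definition partitions (n : nat) : {set {ffun 'I_n.+1 -> 'I_n.+1}} :=
  [set m : {ffun 'I_n.+1 -> 'I_n.+1} | (nat_of_ord (m ord0) == 0) && (\sum_(i < n.+1) i * m i == n)].

Definition nu n (m : {ffun 'I_n.+1 -> 'I_n.+1}) (r : nat) : nat :=
  \sum_(i < n.+1 | i %% 8 == r %% 8) m i.

Definition mu n (m : {ffun 'I_n.+1 -> 'I_n.+1}) (k : nat) : nat :=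
  \sum_(i < n.+1 | nat_of_ord i == k) m i.

Definition parts_in n (m : {ffun 'I_n.+1 -> 'I_n.+1}) (P : pred nat) : bool :=
  [forall i : 'I_n.+1, (0 < m i) ==> P i].

Definition cond_tilde n (m : {ffun 'I_n.+1 -> 'I_n.+1}) : bool :=
  let D := nu m 1 - nu m 7 in
  (nu m 7 <= nu m 1) &&
  [|| (3 %| D) && (2 * D <= 3 * mu m 1),
      [&& 5 %| D, ~~ (3 %| D) & 4 * D <= 5 * mu m 1]
    | [&& 15 %| D + 8, 0 < mu m 7 & 4 * D <= 5 * mu m 1 + 3]].

Definition Atilde_L0 (L n : nat) : nat :=
  #|[set m in partitions n |
       parts_in m (fun i => ((i %% 8 == 1) || (i %% 8 == 7)) && (i <= 8 * L - 1))
       && cond_tilde m]|.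

Definition A_L1 (L n : nat) : nat :=
  #|[set m in partitions n |
       parts_in m (fun i => ((i %% 8 == 3) || (i %% 8 == 5)) && (i <= 8 * L - 3))]|.

From mathcomp Require Import all_boot zify.
Set Implicit Arguments. Unset Strict Implicit. Unset Printing Implicit Defensive.

(* A partition whose parts are congruent to r or s (mod 8) and smaller than 8(L+1) is
   determined by its profile, the pair of vectors k |-> mu(pi, 8k+r) and
   k |-> mu(pi, 8k+s) for k <= L.  Let a and b count the parts congruent to 3 and to 5
   (mod 8) of a partition of n.  If b <= a, relabel 8k+3 |-> 8k+1 and 8k+5 |-> 8k+7; the weight
   drops by 2(a-b), restored by 2(a-b) extra 1s, and D = 3(a-b): case (i).  If b > a,
   relabel 8k+5 |-> 8k+1 and 8k+3 |-> 8k+7; the weight drops by 4(b-a), restored by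
   4(b-a) extra 1s, and D = 5(b-a): case (ii) when 3 does not divide b-a.  When it
   does, add 4(b-a)-7 ones and one 7 instead, so that D = 5(b-a)-8: case (iii).  The
   residue of D mod 15 tells which case occurred, and the lower bounds on mu(pi,1)
   and mu(pi,7) say exactly that the added parts can be removed again. *)

Lemma card_in_bij (T1 T2 : finType) (A : {set T1}) (B : {set T2})
    (f : T1 -> T2) (g : T2 -> T1) :
  {in A, forall x, f x \in B} -> {in B, forall y, g y \in A} ->
  {in A, cancel f g} -> {in B, cancel g f} -> #|A| = #|B|.
Proof.
move=> fAB gBA fK gK; rewrite -(card_in_imset (can_in_inj fK)).
apply: eq_card => y; apply/imsetP/idP => [[x Ax ->]|By]; first exact: fAB.
by exists (g y); rewrite ?gBA ?gK.
Qed.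

Lemma sum_pick (I : finType) (i0 : I) (F : I -> nat) :
  \sum_i (i == i0) * F i = F i0.
Proof. by rewrite (bigD1 i0) //= eqxx mul1n big1 ?addn0 // => i /negbTE ->. Qed.

Lemma sum_ord_pick (N j : nat) (F : nat -> nat) :
  \sum_(i < N) (j == i) * F i = (j < N) * F j.
Proof.
transitivity (\sum_(i < N | i == j :> nat) F i).
  rewrite [RHS]big_mkcond; apply: eq_bigr => i _.
  by rewrite eq_sym; case: (i == j :> nat); rewrite ?mul1n.
by rewrite big_ord1_eq; case: (j < N); rewrite ?mul1n.
Qed.

Lemma big_mkmul (I : finType) (P : pred I) (F : I -> nat) :
  \sum_(i | P i) F i = \sum_i P i * F i.
Proof. by rewrite big_mkcond; apply: eq_bigr => i _; case: (P i); rewrite ?mul1n. Qed.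

Lemma sum_block_eq N r i : r < 8 ->
  \sum_(k < N) (8 * k + r == i) = (i %% 8 == r) && (i < 8 * N).
Proof.
move=> r_lt8; elim: N => [|N IH]; first by rewrite big_ord0 andbF.
rewrite big_ord_recr /= IH.
by case: (i %% 8 =P r); case: (8 * N + r =P i);
  case: (ltnP i (8 * N)); case: (ltnP i (8 * N.+1)); lia.
Qed.

Lemma mu_ord n (m : {ffun 'I_n.+1 -> 'I_n.+1}) (i : 'I_n.+1) : mu m i = m i.
Proof. by rewrite /mu (big_pred1 i) // => j; exact: val_eqE. Qed.

Lemma mu_le n (m : {ffun 'I_n.+1 -> 'I_n.+1}) i :
  m \in partitions n -> i * mu m i <= n.
Proof.
rewrite inE => /andP[_ /eqP {2}<-]; rewrite /mu big_distrr big_mkcond /=.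
by apply: leq_sum => j _; case: eqP => [->|].
Qed.

Lemma eq_parts_in n (m : {ffun 'I_n.+1 -> 'I_n.+1}) (P Q : pred nat) :
  P =1 Q -> parts_in m P = parts_in m Q.
Proof. by move=> eqPQ; apply: eq_forallb => i; rewrite eqPQ. Qed.

Definition cond_tilde_of (N1 N7 M1 M7 : nat) : bool :=
  let D := N1 - N7 in
  (N7 <= N1) &&
  [|| (3 %| D) && (2 * D <= 3 * M1),
      [&& 5 %| D, ~~ (3 %| D) & 4 * D <= 5 * M1]
    | [&& 15 %| D + 8, 0 < M7 & 4 * D <= 5 * M1 + 3]].

Lemma cond_tildeE n (m : {ffun 'I_n.+1 -> 'I_n.+1}) :
  cond_tilde m = cond_tilde_of (nu m 1) (nu m 7) (mu m 1) (mu m 7).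
Proof. by []. Qed.

Section Profiles.

Variable L : nat.
Local Notation vec := {ffun 'I_L.+1 -> nat}.
Implicit Types (u v x y : vec) (p : vec * vec).

Definition nparts (u : vec) := \sum_(k < L.+1) u k.
Definition moment (u : vec) := \sum_(k < L.+1) k * u k.
Definition weight r (u : vec) := \sum_(k < L.+1) (8 * k + r) * u k.
Definition incr0 c (u : vec) : vec := [ffun k => u k + (k == ord0) * c].
Definition decr0 c (u : vec) : vec := [ffun k => u k - (k == ord0) * c].

Lemma weightE r u : weight r u = 8 * moment u + r * nparts u.
Proof.
rewrite /weight /moment /nparts !big_distrr -big_split /=.
by apply: eq_bigr => k _; rewrite mulnA -mulnDl.
Qed.

Lemma ord0_le_nparts u : u ord0 <= nparts u.
Proof. by rewrite /nparts (bigD1 ord0) //= leq_addr. Qed.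

Lemma nparts_incr0 c u : nparts (incr0 c u) = nparts u + c.
Proof.
by rewrite /nparts (eq_bigr _ (fun k _ => ffunE _ k)) big_split /= sum_pick.
Qed.

Lemma moment_incr0 c u : moment (incr0 c u) = moment u.
Proof.
by apply: eq_bigr => k _; rewrite ffunE; case: eqP => [->|_]; rewrite ?addn0.
Qed.

Lemma incr0_ord0 c u : incr0 c u ord0 = u ord0 + c.
Proof. by rewrite ffunE eqxx mul1n. Qed.

Lemma incr0K c : cancel (incr0 c) (decr0 c).
Proof. by move=> u; apply/ffunP => k; rewrite !ffunE addnK. Qed.

Lemma decr0K c u : c <= u ord0 -> incr0 c (decr0 c u) = u.
Proof.
move=> le_c; apply/ffunP => k; rewrite !ffunE.
by case: eqP => [->|_]; rewrite ?mul1n ?subnK ?mul0n ?subn0 ?addn0.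
Qed.

Lemma nparts_decr0 c u : c <= u ord0 -> nparts (decr0 c u) = nparts u - c.
Proof. by move=> le_c; rewrite -{2}(decr0K le_c) nparts_incr0 addnK. Qed.

Definition profile_cond (p : vec * vec) :=
  cond_tilde_of (nparts p.1) (nparts p.2) (p.1 ord0) (p.2 ord0).

Definition to17 (p : vec * vec) : vec * vec :=
  let: (u, v) := p in
  let a := nparts u in let b := nparts v in
  if b <= a then (incr0 (2 * (a - b)) u, v)
  else if ~~ (3 %| b - a) then (incr0 (4 * (b - a)) v, u)
  else (incr0 (4 * (b - a) - 7) v, incr0 1 u).

Definition to35 (p : vec * vec) : vec * vec :=
  let: (x, y) := p in
  let D := nparts x - nparts y in
  if 3 %| D then (decr0 (2 * (D %/ 3)) x, y)
  else if 5 %| D then (y, decr0 (4 * (D %/ 5)) x)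
  else (decr0 1 y, decr0 ((4 * D - 3) %/ 5) x).

Lemma weight_to17 p :
  weight 1 (to17 p).1 + weight 7 (to17 p).2 = weight 3 p.1 + weight 5 p.2.
Proof.
case: p => u v; rewrite /to17; case: leqP => lt_ab; last case: ifP => dvd3.
all: by rewrite /= !weightE ?nparts_incr0 ?moment_incr0; lia.
Qed.

Lemma cond_to17 p : profile_cond (to17 p).
Proof.
case: p => u v; rewrite /to17; case: leqP => lt_ab; last case: ifP => dvd3.
all: by rewrite /profile_cond /cond_tilde_of /= ?nparts_incr0 ?incr0_ord0; lia.
Qed.

Lemma to17K : cancel to17 to35.
Proof.
case=> u v; rewrite /to17; case: leqP => lt_ab; last case: ifP => dvd3.
- rewrite /to35 nparts_incr0 ifT; last by lia.
  by rewrite (_ : 2 * _ = 2 * (nparts u - nparts v)) ?incr0K //; lia.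
- rewrite /to35 nparts_incr0 ifF; last by lia.
  rewrite ifT; last by lia.
  by rewrite (_ : 4 * _ = 4 * (nparts v - nparts u)) ?incr0K //; lia.
- rewrite /to35 !nparts_incr0 ifF; last by lia.
  rewrite ifF; last by lia.
  by rewrite (_ : (4 * _ - 3) %/ 5 = 4 * (nparts v - nparts u) - 7) ?incr0K //; lia.
Qed.

Lemma to35K p : profile_cond p -> to17 (to35 p) = p.
Proof.
case: p => x y; rewrite /profile_cond /cond_tilde_of /= => cond_xy.
rewrite /to35; case: ifP => dvd3; last case: ifP => dvd5.
- have le_c : 2 * ((nparts x - nparts y) %/ 3) <= x ord0 by lia.
  rewrite /to17 nparts_decr0 // ifT; last by lia.
  by rewrite (_ : 2 * _ = 2 * ((nparts x - nparts y) %/ 3)) ?decr0K //; lia.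
- have le_c : 4 * ((nparts x - nparts y) %/ 5) <= x ord0 by lia.
  rewrite /to17 nparts_decr0 // ifF; last by lia.
  rewrite ifT; last by lia.
  by rewrite (_ : 4 * _ = 4 * ((nparts x - nparts y) %/ 5)) ?decr0K //; lia.
- have le_c : (4 * (nparts x - nparts y) - 3) %/ 5 <= x ord0 by lia.
  have le_1 : 1 <= y ord0 by lia.
  have le_y0 := ord0_le_nparts y.
  rewrite /to17 !nparts_decr0 // ifF; last by lia.
  rewrite ifF; last by lia.
  by rewrite (_ : 4 * _ - 7 = (4 * (nparts x - nparts y) - 3) %/ 5) ?decr0K //; lia.
Qed.

Lemma weight_to35 p : profile_cond p ->
  weight 3 (to35 p).1 + weight 5 (to35 p).2 = weight 1 p.1 + weight 7 p.2.
Proof. by move=> cond_p; rewrite -[in RHS](to35K cond_p) weight_to17. Qed.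

End Profiles.

Definition in_class L t i := (i %% 8 == t) && (i < 8 * L.+1).
Definition in_classes L r s : pred nat := fun i => in_class L r i || in_class L s i.

Lemma eq_block L (j k : 'I_L.+1) t t' : t < 8 -> t' < 8 ->
  (8 * j + t == 8 * k + t') = (j == k) && (t == t').
Proof.
move=> t_lt8 t'_lt8; rewrite -val_eqE /=.
by apply/eqP/andP => [?|[/eqP -> /eqP ->]] //; split; apply/eqP; lia.
Qed.

Lemma mod8_block k t t' : t < 8 -> t' < 8 -> ((8 * k + t) %% 8 == t' %% 8) = (t == t').
Proof. by move=> t_lt8 t'_lt8; rewrite mulnC modnMDl !modn_small. Qed.

Definition admissible_classes r s := [&& 0 < r, r < 8, 0 < s, s < 8 & r != s].

Fact admissible17 : admissible_classes 1 7. Proof. by []. Qed.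
Fact admissible35 : admissible_classes 3 5. Proof. by []. Qed.

Section Encoding.

Variables n L r s : nat.
Hypothesis rs_ok : admissible_classes r s.
Local Notation vec := {ffun 'I_L.+1 -> nat}.
Local Notation partition := {ffun 'I_n.+1 -> 'I_n.+1}.
Implicit Types (p : vec * vec) (m : partition).

Let r_gt0 : 0 < r. Proof. by case/and5P: rs_ok. Qed.
Let r_lt8 : r < 8. Proof. by case/and5P: rs_ok. Qed.
Let s_gt0 : 0 < s. Proof. by case/and5P: rs_ok. Qed.
Let s_lt8 : s < 8. Proof. by case/and5P: rs_ok. Qed.
Let r_neq_s : r != s. Proof. by case/and5P: rs_ok. Qed.

Lemma in_class_add i : in_class L r i + in_class L s i = in_classes L r s i.
Proof.
rewrite /in_classes /in_class.
by case: (i %% 8 =P r); case: (i %% 8 =P s); case: (i < 8 * L.+1) => //=; lia.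
Qed.

Definition profile m : vec * vec :=
  ([ffun k : 'I_L.+1 => mu m (8 * k + r)], [ffun k : 'I_L.+1 => mu m (8 * k + s)]).

Definition profile_mult p i :=
  \sum_(k < L.+1) ((8 * k + r == i) * p.1 k + (8 * k + s == i) * p.2 k).

Definition of_profile p : partition := [ffun i : 'I_n.+1 => inord (profile_mult p i)].

(* Guarantees that of_profile p neither truncates a multiplicity (inord) nor drops
   a part larger than n. *)
Definition fits p :=
  forall k : 'I_L.+1, (8 * k + r) * p.1 k <= n /\ (8 * k + s) * p.2 k <= n.

Lemma weight_fits p : weight r p.1 + weight s p.2 <= n -> fits p.
Proof.
move=> le_n k.
have : (8 * k + r) * p.1 k <= weight r p.1 by rewrite /weight (bigD1 k) //= leq_addr.
have : (8 * k + s) * p.2 k <= weight s p.2 by rewrite /weight (bigD1 k) //= leq_addr.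
lia.
Qed.

Lemma profile_fits m : m \in partitions n -> fits (profile m).
Proof. by move=> m_part k; rewrite !ffunE !mu_le. Qed.

Lemma profile_mult_le p i : fits p -> profile_mult p i <= n * in_classes L r s i.
Proof.
move=> fit_p; rewrite /profile_mult -in_class_add /in_class mulnDr -!sum_block_eq //.
rewrite !big_distrr big_split /= leq_add //.
all: apply: leq_sum => k _; have [fit1 fit2] := fit_p k.
all: case: eqP => _; rewrite ?mul0n ?muln0 ?mul1n ?muln1 //.
- by apply: leq_trans fit1; rewrite leq_pmull // addn_gt0 r_gt0 orbT.
- by apply: leq_trans fit2; rewrite leq_pmull // addn_gt0 s_gt0 orbT.
Qed.

Lemma of_profileE p (i : 'I_n.+1) : fits p -> of_profile p i = profile_mult p i :> nat.
Proof.
move=> fit_p; rewrite ffunE inordK // ltnS (leq_trans (profile_mult_le i fit_p)) //.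
by rewrite -[leqRHS]muln1 leq_mul2l leq_b1 orbT.
Qed.

Lemma sum_of_profile (w : nat -> nat) p : fits p ->
  \sum_(i < n.+1) w i * of_profile p i =
  \sum_(k < L.+1) (w (8 * k + r) * p.1 k + w (8 * k + s) * p.2 k).
Proof.
move=> fit_p.
have pick_fit j a : j * a <= n -> (j < n.+1) * (w j * a) = w j * a.
  case: (posnP a) => [->|a_gt0 ja]; first by rewrite !muln0.
  by rewrite ltnS (leq_trans (leq_pmulr _ a_gt0) ja) mul1n.
under eq_bigr => i _ do rewrite of_profileE // /profile_mult big_distrr.
rewrite exchange_big /=; apply: eq_bigr => k _; have [fit1 fit2] := fit_p k.
under eq_bigr => i _ do rewrite mulnDr (mulnCA (w i)) (mulnCA (w i)).
rewrite big_split /= (sum_ord_pick _ _ (fun i => w i * p.1 k)).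
by rewrite (sum_ord_pick _ _ (fun i => w i * p.2 k)) !pick_fit.
Qed.

Lemma of_profile_partition p : weight r p.1 + weight s p.2 = n ->
  of_profile p \in partitions n.
Proof.
move=> wt_p; have fit_p : fits p by apply: weight_fits; rewrite wt_p.
rewrite inE; apply/andP; split.
  have not_in0 : in_classes L r s 0 = false by rewrite /in_classes /in_class; lia.
  by rewrite -leqn0 of_profileE // (leq_trans (profile_mult_le _ fit_p)) // not_in0 muln0.
by apply/eqP; rewrite (sum_of_profile (fun i => i)) // big_split -wt_p.
Qed.

Lemma parts_in_of_profile p : fits p -> parts_in (of_profile p) (in_classes L r s).
Proof.
move=> fit_p; apply/forallP => i; apply/implyP; rewrite of_profileE // => pos_i.
have := leq_trans pos_i (profile_mult_le i fit_p).
by case: (in_classes L r s i); rewrite ?muln0.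
Qed.

Lemma of_profileK p : fits p -> profile (of_profile p) = p.
Proof.
case: p => u v fit_p; congr pair; apply/ffunP => k; rewrite ffunE /mu big_mkmul.
- rewrite (sum_of_profile (fun i => i == 8 * k + r)) //=.
  under eq_bigr => j _ do
    rewrite !eq_block // eqxx (eq_sym s) (negbTE r_neq_s) andbT andbF addn0.
  exact: sum_pick.
- rewrite (sum_of_profile (fun i => i == 8 * k + s)) //=.
  under eq_bigr => j _ do rewrite !eq_block // eqxx (negbTE r_neq_s) andbT andbF add0n.
  exact: sum_pick.
Qed.

Lemma profileK m : m \in partitions n -> parts_in m (in_classes L r s) ->
  of_profile (profile m) = m.
Proof.
move=> m_part m_in; have fit_m := profile_fits m_part.
apply/ffunP => i; apply: val_inj => /=; rewrite of_profileE //.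
have -> : profile_mult (profile m) i = in_classes L r s i * m i.
  rewrite /profile_mult -in_class_add /in_class mulnDl -!sum_block_eq //.
  rewrite !big_distrl -big_split /=.
  apply: eq_bigr => k _; rewrite !ffunE.
  by case: eqP => [->|_]; case: eqP => [->|_]; rewrite ?mul0n ?mu_ord.
by case: (posnP (m i)) => [->|/(implyP (forallP m_in i)) ->]; rewrite ?muln0 ?mul1n.
Qed.

Lemma sum_profile (w : nat -> nat) m :
  m \in partitions n -> parts_in m (in_classes L r s) ->
  \sum_(i < n.+1) w i * m i =
  \sum_(k < L.+1) (w (8 * k + r) * (profile m).1 k + w (8 * k + s) * (profile m).2 k).
Proof.
by move=> m_part m_in; rewrite -(sum_of_profile w (profile_fits m_part)) profileK.
Qed.

Lemma weight_profile m : m \in partitions n -> parts_in m (in_classes L r s) ->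
  weight r (profile m).1 + weight s (profile m).2 = n.
Proof.
move=> m_part m_in; rewrite /weight -big_split /= -(sum_profile (fun i => i)) //.
by move: m_part; rewrite inE => /andP[_ /eqP].
Qed.

Lemma nu_profile m : m \in partitions n -> parts_in m (in_classes L r s) ->
  nu m r = nparts (profile m).1 /\ nu m s = nparts (profile m).2.
Proof.
move=> m_part m_in; split; rewrite /nu big_mkmul.
- rewrite (sum_profile (fun i => i %% 8 == r %% 8)) //; apply: eq_bigr => k _.
  by rewrite !mod8_block // eqxx (eq_sym s) (negbTE r_neq_s) mul1n mul0n addn0.
- rewrite (sum_profile (fun i => i %% 8 == s %% 8)) //; apply: eq_bigr => k _.
  by rewrite !mod8_block // eqxx (negbTE r_neq_s) mul1n mul0n add0n.
Qed.

End Encoding.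

Section Bijection.

Variables n L : nat.
Local Notation partition := {ffun 'I_n.+1 -> 'I_n.+1}.
Implicit Type m : partition.

Definition tilde_partitions : {set partition} :=
  [set m in partitions n | parts_in m (in_classes L 1 7) && cond_tilde m].

Definition pm3_partitions : {set partition} :=
  [set m in partitions n | parts_in m (in_classes L 3 5)].

Definition to_tilde m := of_profile n 1 7 (to17 (profile L 3 5 m)).

Definition of_tilde m := of_profile n 3 5 (to35 (profile L 1 7 m)).

Lemma cond_tilde_profile m : m \in partitions n -> parts_in m (in_classes L 1 7) ->
  cond_tilde m = profile_cond (profile L 1 7 m).
Proof.
move=> m_part m_in; have [nu1 nu7] := nu_profile admissible17 m_part m_in.
by rewrite cond_tildeE nu1 nu7 /profile_cond !ffunE.
Qed.

Lemma pm3_weight m : m \in pm3_partitions ->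
  weight 1 (to17 (profile L 3 5 m)).1 + weight 7 (to17 (profile L 3 5 m)).2 = n.
Proof.
by rewrite inE => /andP[m_part m_in]; rewrite weight_to17 (weight_profile admissible35).
Qed.

Lemma tilde_weight m : m \in tilde_partitions ->
  weight 3 (to35 (profile L 1 7 m)).1 + weight 5 (to35 (profile L 1 7 m)).2 = n.
Proof.
rewrite inE => /and3P[m_part m_in]; rewrite cond_tilde_profile // => m_cond.
by rewrite weight_to35 // (weight_profile admissible17).
Qed.

Lemma to_tilde_mem : {in pm3_partitions, forall m, to_tilde m \in tilde_partitions}.
Proof.
move=> m /pm3_weight wt; have fit := weight_fits admissible17 (eq_leq wt).
have part := of_profile_partition admissible17 wt.
have parts := parts_in_of_profile admissible17 fit.
by rewrite inE part parts cond_tilde_profile // of_profileK // cond_to17.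
Qed.

Lemma of_tilde_mem : {in tilde_partitions, forall m, of_tilde m \in pm3_partitions}.
Proof.
move=> m /tilde_weight wt; have fit := weight_fits admissible35 (eq_leq wt).
have part := of_profile_partition admissible35 wt.
by rewrite inE part (parts_in_of_profile admissible35 fit).
Qed.

Lemma to_tildeK : {in pm3_partitions, cancel to_tilde of_tilde}.
Proof.
move=> m m_pm3; have fit := weight_fits admissible17 (eq_leq (pm3_weight m_pm3)).
move: m_pm3; rewrite inE => /andP[m_part m_in].
by rewrite /of_tilde of_profileK // to17K (profileK admissible35).
Qed.

Lemma of_tildeK : {in tilde_partitions, cancel of_tilde to_tilde}.
Proof.
move=> m m_tilde; have fit := weight_fits admissible35 (eq_leq (tilde_weight m_tilde)).
move: m_tilde; rewrite inE => /and3P[m_part m_in]; rewrite cond_tilde_profile // => m_cond.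
by rewrite /to_tilde of_profileK // to35K // (profileK admissible17).
Qed.

Lemma card_tilde_partitions : #|tilde_partitions| = #|pm3_partitions|.
Proof. exact: card_in_bij of_tilde_mem to_tilde_mem of_tildeK to_tildeK. Qed.

Lemma Atilde_L0E : Atilde_L0 L.+1 n = #|tilde_partitions|.
Proof.
rewrite /Atilde_L0; apply: eq_card => m; rewrite !inE; congr (_ && (_ && _)).
by apply: eq_parts_in => i; rewrite /in_classes /in_class; apply/idP/idP; lia.
Qed.

Lemma A_L1E : A_L1 L.+1 n = #|pm3_partitions|.
Proof.
rewrite /A_L1; apply: eq_card => m; rewrite !inE; congr (_ && _).
by apply: eq_parts_in => i; rewrite /in_classes /in_class; apply/idP/idP; lia.
Qed.

End Bijection.

Theorem theorem3 (L n : nat) : 1 <= L -> Atilde_L0 L n = A_L1 L n.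
Proof. by case: L => // L _; rewrite Atilde_L0E A_L1E card_tilde_partitions. Qed.
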